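(* Let $B:W_\mathbb{C}\times W_\mathbb{C}\to\mathbb{R}$ be an element of $\mathsf{BIL}$. Then the $2$-cocycle $\Gamma_\ell\times\Gamma_\ell\to\mathcal{O}_\epsilon$, $([h,t],[h',t'])\mapsto B(t,t')$ (constant functions), represents the zero class in $\mathrm{H}^2(\Gamma_\ell,\mathcal{O}_\epsilon)$. That is, the image of $\mathsf{BIL}$ in $\mathrm{H}^2(\Gamma_\ell,\mathcal{O}_\epsilon)$ vanishes.
   Context: Let $\mathbf{k}=\mathbb{Q}(\sqrt d)$ be imaginary quadratic of discriminant $d<0$ inside $\mathbb{C}$, $\delta=\sqrt d$ (principal branch). Let $V$ be a hermitian $\mathbf{k}$-space of signature $(1,n+1)$, $n\ge1$, with form $\langle\cdot,\cdot\rangle$ linear in the left argument, $V_\mathbb{C}=V\otimes\mathbb{C}$; $L$ an even integral full-rank $\mathcal{O}_\mathbf{k}$-lattice with dual $L'$ (w.r.t. the inverse different); $\Gamma$ a finite-index subgroup of the subgroup of $\mathrm{SU}(L)$ acting trivially on $L'/L$. Fix primitive isotropic $\ell\in L$, $\ell'\in L'$ with $\langle\ell,\ell'\rangle\ne0$; $D=L\cap\ell^\perp\cap\ell'^\perp$, $W=D\otimes\mathbf{k}$, $W_\mathbb{C}=W\otimes\mathbb{C}$. Siegel domain $\mathcal{H}=\{(\tau,\sigma)\in\mathbb{C}\times W_\mathbb{C}:2\operatorname{Im}(\tau)|\delta||\langle\ell,\ell'\rangle|^2>-\langle\sigma,\sigma\rangle\}$. The Heisenberg group consists of pairs $[h,t]$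 ($h\in\mathbb{Q}$, $t\in W$) with law $[h,t]\circ[h',t']=[h+h'+|\delta|^{-1}\operatorname{Im}\langle t',t\rangle,t+t']$, acting on $\mathcal{H}$ by $[h,0]:(\tau,\sigma)\mapsto(\tau+h,\sigma)$, $[0,t]:(\tau,\sigma)\mapsto(\tau+\frac{\langle\sigma,t\rangle}{\delta\langle\ell',\ell\rangle}+\frac{\langle t,t\rangle}{2\delta},\sigma+\langle\ell',\ell\rangle t)$. $\Gamma_\ell=\Gamma\cap$ Heisenberg group, assumed to equal $\{[h,t]:h\in N\mathbb{Z},t\in D_{\ell,\Gamma}\}$ for some $N\in\mathbb{Q}_{>0}$ and finite-index sublattice $D_{\ell,\Gamma}\subseteq D$. For $\epsilon>0$, $U_\epsilon(\ell)=\{[z]\in\mathbb{P}V_\mathbb{C}:\langle z,z\rangle>0,\ \langle z,z\rangle|\langle\ell',\ell\rangle|^2/|\langle z,\ell\rangle|^2>1/\epsilon\}$, identified with a $\Gamma_\ell$-stable subset of $\mathcal{H}$ via $z(\tau,\sigma)=\ell'-\delta\tau\langle\ell',\ell\rangle\ell+\sigma$. $\mathcal{O}_\epsilon$ is the ring of holomorphic functions on $U_\epsilon(\ell)$ with the $\Gamma_\ell$-action induced from the action on $U_\epsilon(\ell)$; group cohomology is computed with the standard inhomogeneous complex. $\mathsf{BIL}$ is the real vector space of real bilinear forms on $W_\mathbb{C}$ spanned by forms $\operatorname{Im}H$ with $H$ a hermitian form on $W_\mathbb{C}$ and forms $\operatorname{Im}G$ with $G$ a symmetric complex bilinear form on $W_\mathbb{C}$.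 *)

From HB Require Import structures.
From mathcomp Require Import all_boot all_order all_algebra.
From mathcomp Require Import complex.
From mathcomp Require Import reals.

Set Implicit Arguments.
Unset Strict Implicit.
Unset Printing Implicit Defensive.

Import Order.TTheory GRing.Theory Num.Theory.
Local Open Scope complex_scope.
Local Open Scope ring_scope.

(* vectors of V_C = C^(n+2) are column vectors 'cV[R[i]]_(n.+2) (coordinates   *)
(* w.r.t. a fixed k-basis of V), so that V = k^(n+2) sits inside V_C.          *)

Section Defs.
Variable R : realType.
Local Notation C := (R[i]).

Definition int_squarefree (m : int) : Prop :=
  forall p : nat, prime p -> ~ ((p * p)%:Z %| m)%Z.

Definition fund_disc (d : int) : Prop :=
  ((d %% 4)%Z = 1 /\ int_squarefree d) \/
  (exists m : int, d = 4 * m /\ ((m %% 4)%Z = 2 \/ (m %% 4)%Z = 3) /\ int_squarefree m).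

(* delta = sqrt d, principal branch: i * sqrt|d| (d < 0) *)
Definition sqd (d : int) : C := 'i%C * (Num.sqrt ((- d)%:~R : R))%:C.

Definition in_k (d : int) (x : C) : Prop :=
  exists a b : rat, x = ratr a + ratr b * sqd d.

Definition in_Ok (d : int) (x : C) : Prop :=
  exists a b : int, x = a%:~R + b%:~R * ((d%:~R + sqd d) / 2%:R).

Definition in_invdiff (d : int) (x : C) : Prop := in_Ok d (sqd d * x).

Variable m : nat.
Local Notation vec := 'cV[C]_m.

Definition mconj (M : 'M[C]_(m, m)) : 'M[C]_(m, m) := map_mx (@conjc R) M.

(* <x, y> = x^T A conj(y) : linear in the left argument *)
Definition hform (A : 'M[C]_m) (x y : vec) : C :=
  (x^T *m A *m map_mx (@conjc R) y) 0 0.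

Definition in_V (d : int) (x : vec) : Prop := forall i, in_k d (x i 0).

(* A is the Gram matrix (w.r.t. a k-basis of V) of a hermitian form on V *)
Definition herm_gram (d : int) (A : 'M[C]_m) : Prop :=
  (forall i j, in_k d (A i j)) /\ A^T = mconj A.

Definition has_signature (A : 'M[C]_m) (p : nat) : Prop :=
  exists P : 'M[C]_m, P \in unitmx /\
    P^T *m A *m mconj P = diag_mx (\row_(i < m) (if (i < p)%N then 1 else -1)).

Definition Zspan (k : nat) (b : 'I_k -> vec) (x : vec) : Prop :=
  exists c : 'I_k -> int, x = \sum_(i < k) (c i)%:~R *: b i.

Definition Ok_lattice (d : int) (L : vec -> Prop) : Prop :=
  (exists (k : nat) (b : 'I_k -> vec),
      (forall i, in_V d (b i)) /\ (forall x, L x <-> Zspan b x)) /\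
  (forall a x, in_Ok d a -> L x -> L (a *: x)) /\
  (exists b : 'I_m -> vec, (forall i, L (b i)) /\
      (\matrix_(i < m, j < m) b j i 0) \in unitmx).

Definition integral_lattice (d : int) (A : 'M[C]_m) (L : vec -> Prop) : Prop :=
  forall x y, L x -> L y -> in_invdiff d (hform A x y).

Definition even_lattice (A : 'M[C]_m) (L : vec -> Prop) : Prop :=
  forall x, L x -> exists z : int, hform A x x = z%:~R.

Definition dual (d : int) (A : 'M[C]_m) (L : vec -> Prop) (x : vec) : Prop :=
  in_V d x /\ forall y, L y -> in_invdiff d (hform A x y).

Definition isotropic (A : 'M[C]_m) (x : vec) : Prop := hform A x x = 0.

Definition primitive (d : int) (P : vec -> Prop) (v : vec) : Prop :=
  P v /\ v != 0 /\
  forall x, P x -> (exists a, in_k d a /\ x = a *: v) -> exists b, in_Ok d b /\ x = b *: v.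

Definition in_SU (d : int) (A : 'M[C]_m) (L : vec -> Prop) (g : 'M[C]_m) : Prop :=
  (forall i j, in_k d (g i j)) /\
  g^T *m A *m mconj g = A /\
  \det g = 1 /\
  (forall x, L x <-> L (g *m x)).

(* the discriminant kernel: elements of SU(L) acting trivially on L'/L *)
Definition disc_kernel (d : int) (A : 'M[C]_m) (L : vec -> Prop) (g : 'M[C]_m) : Prop :=
  in_SU d A L g /\ forall x, dual d A L x -> L (g *m x - x).

Definition finite_index_subgroup (G H : 'M[C]_m -> Prop) : Prop :=
  (forall g, H g -> G g) /\ H 1%:M /\
  (forall g h, H g -> H h -> H (g *m h)) /\
  (forall g, H g -> H (invmx g)) /\
  (exists s : seq 'M[C]_m, forall g, G g -> exists2 r, r \in s & H (invmx r *m g)).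

Definition Dlat (A : 'M[C]_m) (L : vec -> Prop) (l l' : vec) (x : vec) : Prop :=
  L x /\ hform A x l = 0 /\ hform A x l' = 0.

Definition span_over (K : C -> Prop) (P : vec -> Prop) (x : vec) : Prop :=
  exists (k : nat) (a : 'I_k -> C) (v : 'I_k -> vec),
    (forall i, K (a i) /\ P (v i)) /\ x = \sum_(i < k) a i *: v i.

(* W = D (x) k,  W_C = D (x) C, realised inside V resp. V_C *)
Definition in_W d A L l l' := span_over (in_k d) (Dlat A L l l').
Definition in_WC A L l l' := span_over (fun _ => True) (Dlat A L l l').

(* points (tau, sigma) in C x W_C; the constant <l', l> *)
Definition Siegel d A L (l l' : vec) (p : C * vec) : Prop :=
  in_WC A L l l' p.2 /\
  - complex.Re (hform A p.2 p.2) <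
    2 * complex.Im p.1 * Num.sqrt ((- d)%:~R : R) * Normc.normc (hform A l l') ^+ 2.

Definition zvec d A (l l' : vec) (p : C * vec) : vec :=
  l' - (sqd d * p.1 * hform A l' l) *: l + p.2.

(* action of the Heisenberg element [h, t] (h in Q viewed in C, t in W) *)
Definition heis_act d A (l l' : vec) (h : C) (t : vec) (p : C * vec) : C * vec :=
  (p.1 + h + hform A p.2 t / (sqd d * hform A l' l) + hform A t t / (2%:R * sqd d),
   p.2 + hform A l' l *: t).

Definition heis_mul1 d A (h : C) (t : vec) (h' : C) (t' : vec) : C :=
  h + h' + (complex.Im (hform A t' t) / Num.sqrt ((- d)%:~R : R))%:C.

(* g in U(V) is the Heisenberg element [h,t]: it fixes l and induces the
   action of [h,t] on the Siegel domain via [z] |-> [g z] *)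
Definition is_heis d A L (l l' : vec) (g : 'M[C]_m) (h : C) (t : vec) : Prop :=
  g *m l = l /\
  forall p, Siegel d A L l l' p ->
    exists lam : C, g *m zvec d A l l' p = lam *: zvec d A l l' (heis_act d A l l' h t p).

Definition Ueps d A L (l l' : vec) (eps : R) (p : C * vec) : Prop :=
  Siegel d A L l l' p /\
  let z := zvec d A l l' p in
  0 < complex.Re (hform A z z) /\ complex.Im (hform A z z) = 0 /\
  1 / eps < complex.Re (hform A z z) * Normc.normc (hform A l' l) ^+ 2
            / Normc.normc (hform A z l) ^+ 2.

Definition vnorm (p : C * vec) : R := Normc.normc p.1 + \sum_(i < m) Normc.normc (p.2 i 0).

Definition holo_on (WC : vec -> Prop) (U : C * vec -> Prop) (f : C * vec -> C) : Prop :=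
  forall p, U p -> exists (a : C) (lam : vec),
    forall e : R, 0 < e -> exists2 r : R, 0 < r &
      forall (u : C) (w : vec), WC w -> vnorm (u, w) < r ->
        Normc.normc (f (p.1 + u, p.2 + w) - f p - (a * u + (lam^T *m w) 0 0)) <= e * vnorm (u, w).

Definition herm_on (WC : vec -> Prop) (H : vec -> vec -> C) : Prop :=
  (forall a x y z, WC x -> WC y -> WC z -> H (a *: x + y) z = a * H x z + H y z) /\
  (forall x y, WC x -> WC y -> H y x = conjc (H x y)).

Definition symbil_on (WC : vec -> Prop) (G : vec -> vec -> C) : Prop :=
  (forall a x y z, WC x -> WC y -> WC z -> G (a *: x + y) z = a * G x z + G y z) /\
  (forall x y, WC x -> WC y -> G y x = G x y).

Definition in_BIL (WC : vec -> Prop) (B : vec -> vec -> R) : Prop :=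
  exists (k1 k2 : nat) (a : 'I_k1 -> R) (H : 'I_k1 -> vec -> vec -> C)
         (b : 'I_k2 -> R) (G : 'I_k2 -> vec -> vec -> C),
    (forall i, herm_on WC (H i)) /\ (forall j, symbil_on WC (G j)) /\
    forall x y, WC x -> WC y ->
      B x y = \sum_(i < k1) a i * complex.Im (H i x y)
            + \sum_(j < k2) b j * complex.Im (G j x y).

Definition finite_index_sublattice (D Dg : vec -> Prop) : Prop :=
  (forall x, Dg x -> D x) /\ (Dg 0) /\ (forall x y, Dg x -> Dg y -> Dg (x - y)) /\
  (exists s : seq vec, forall x, D x -> exists2 y, y \in s & Dg (x - y)).

Definition in_Gamma_l (N : rat) (Dg : vec -> Prop) (h : C) (t : vec) : Prop :=
  (exists z : int, h = ratr N * z%:~R) /\ Dg t.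

End Defs.

(* Decompose each [Im H] as [- i H + i Re H].  Then [B = S + Phi] with [S]
   linear in the first and additive in the second argument, and [Phi]
   symmetric and biadditive.  The symmetric part is the coboundary of the
   quadratic function [t |-> - Phi t t / 2] (polarization).  Since [[-h,-t]]
   moves the [W_C]-coordinate [sigma] of a point to [sigma - <l',l> t], the
   part [S] is the coboundary of [(t, p) |-> - S sigma t / <l',l>], which is
   affine, hence holomorphic, in [p] once the linear form [S(., t)] on [W_C]
   is extended to a linear form on [V_C]. *)

From HB Require Import structures.
From mathcomp Require Import all_boot all_order all_algebra.
From mathcomp Require Import complex.
From mathcomp Require Import reals.
From Stdlib Require Import Classical.
From mathcomp Require Import zify ring.

Set Implicit Arguments.
Unset Strict Implicit.
Unset Printing Implicit Defensive.

Import Order.TTheory GRing.Theory Num.Theory.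
Local Open Scope complex_scope.
Local Open Scope ring_scope.

Section SpanOver.
Variables (R : realType) (m : nat) (P : 'cV[R[i]]_m -> Prop).
Local Notation C := R[i].
Local Notation vec := 'cV[C]_m.
Local Notation W := (span_over (fun _ => True) P).

Definition linear_on (f : vec -> C) :=
  forall a x y, W x -> W y -> f (a *: x + y) = a * f x + f y.

Lemma span_over0 : W 0.
Proof. by exists 0%N, (fun _ => 0), (fun _ => 0); split; [case | rewrite big_ord0]. Qed.

Lemma span_over_gen x : P x -> W x.
Proof.
by move=> Px; exists 1%N, (fun _ => 1), (fun _ => x); rewrite big_ord1 scale1r.
Qed.

Lemma span_overD x y : W x -> W y -> W (x + y).
Proof.
move=> [k1 [a1 [v1 [h1 ->]]]] [k2 [a2 [v2 [h2 ->]]]].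
exists (k1 + k2)%N, (fun i => match split i with inl j => a1 j | inr j => a2 j end),
  (fun i => match split i with inl j => v1 j | inr j => v2 j end); split.
  by move=> i; case: (split i) => j; [exact: h1 | exact: h2].
rewrite big_split_ord /=; congr (_ + _); apply: eq_bigr => i _.
  by rewrite (unsplitK (inl _ i)).
by rewrite (unsplitK (inr _ i)).
Qed.

Lemma span_overZ a x : W x -> W (a *: x).
Proof.
move=> [k [c [v [hv ->]]]]; exists k, (fun i => a * c i), v; split => //.
by rewrite scaler_sumr; apply: eq_bigr => i _; rewrite scalerA.
Qed.

Lemma span_over_sum k (c : 'I_k -> C) (v : 'I_k -> vec) :
  (forall i, W (v i)) -> W (\sum_(i < k) c i *: v i).
Proof.
elim: k c v => [|k IH] c v hv; first by rewrite big_ord0; exact: span_over0.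
by rewrite big_ord_recr /=; apply: span_overD; [exact: IH | exact: span_overZ].
Qed.

Lemma linear_on0 f : linear_on f -> f 0 = 0.
Proof.
move=> flin; have := flin 1 0 0 span_over0 span_over0.
by rewrite scale1r addr0 mul1r -{1}[f 0]add0r => /addIr.
Qed.

Lemma linear_on_sum f k (c : 'I_k -> C) (v : 'I_k -> vec) :
  linear_on f -> (forall i, W (v i)) ->
  f (\sum_(i < k) c i *: v i) = \sum_(i < k) c i * f (v i).
Proof.
move=> flin; elim: k c v => [|k IH] c v hv; first by rewrite !big_ord0 linear_on0.
rewrite !big_ord_recr /= addrC flin ?IH 1?addrC //; exact: span_over_sum.
Qed.

Lemma row_free_col_mx k (M : 'M[C]_(k, m)) (w : 'rV[C]_m) :
  row_free M -> ~~ (w <= M)%MS -> row_free (col_mx M w).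
Proof.
move=> freeM wM; apply/eqP/anti_leq; rewrite rank_leq_row /= -addsmxE.
have /ltn_leqif := mxrank_leqif_sup (addsmxSl M w).
by rewrite addsmx_sub submx_refl (negPf wM) (eqP freeM) addn1 => ->.
Qed.

Lemma span_over_grow k (M : 'M[C]_(k, m)) :
  row_free M -> (forall i, W (row i M)^T) -> ~ (forall w, W w -> (w^T <= M)%MS) ->
  exists M' : 'M[C]_(k + 1, m), row_free M' /\ forall i, W (row i M')^T.
Proof.
move=> freeM rowsM /not_all_ex_not [w notMw]; have [Ww /negP wM] := imply_to_and _ _ notMw.
exists (col_mx M w^T); split; first exact: row_free_col_mx.
move=> i; rewrite -(splitK i); case: (split i) => j; first by rewrite rowKu.
by rewrite rowKd ord1 [row 0 _](_ : _ = w^T) ?trmxK //; apply/rowP => z; rewrite !mxE.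
Qed.

Lemma span_over_basis_extend n0 k (M : 'M[C]_(k, m)) :
  (m - k <= n0)%N -> row_free M -> (forall i, W (row i M)^T) ->
  exists k' (M' : 'M[C]_(k', m)),
    [/\ row_free M', forall i, W (row i M')^T & forall w, W w -> (w^T <= M')%MS].
Proof.
elim: n0 k M => [|n0 IH] k M hk freeM rowsM.
all: have [spanM | /(span_over_grow freeM rowsM) [M' [freeM' rowsM']]] :=
  classic (forall w, W w -> (w^T <= M)%MS); first by exists k, M.
all: have km : (k + 1 <= m)%N by rewrite -{1}(eqP freeM') rank_leq_col.
  by move: hk km; lia.
by apply: (IH _ M' _ freeM' rowsM'); move: hk km; lia.
Qed.

Lemma span_over_basis : exists k (M : 'M[C]_(k, m)),
  [/\ row_free M, forall i, W (row i M)^T & forall w, W w -> (w^T <= M)%MS].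
Proof.
have free0 : row_free (0 : 'M[C]_(0, m)) by rewrite /row_free -leqn0 rank_leq_row.
by apply: (span_over_basis_extend (leq_subr 0 m) free0); case.
Qed.

Definition functional_of_basis k (M : 'M[C]_(k, m)) (f : vec -> C) : vec :=
  ((\col_i f (row i M)^T)^T *m pinvmx M^T)^T.

Lemma functional_of_basisE k (M : 'M[C]_(k, m)) f w :
  row_free M -> (forall i, W (row i M)^T) -> (forall w, W w -> (w^T <= M)%MS) ->
  linear_on f -> W w -> f w = ((functional_of_basis M f)^T *m w) 0 0.
Proof.
move=> freeM rowsM spanM flin Ww; have /submxP [c wE] := spanM w Ww.
have wE' : w = M^T *m c^T by rewrite -trmx_mul -wE trmxK.
rewrite /functional_of_basis trmxK {2}wE' mulmxA mulmxKpV ?submx_full //;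
  last by rewrite /row_full mxrank_tr.
have -> : w = \sum_(j < k) c 0 j *: (row j M)^T.
  by rewrite -[w]trmxK wE mulmx_sum_row linear_sum; apply: eq_bigr => j _; rewrite linearZ.
rewrite linear_on_sum // mxE; apply: eq_bigr => j _; by rewrite !mxE mulrC.
Qed.

End SpanOver.

Lemma hform_conj (R : realType) (m : nat) (A : 'M[R[i]]_m) (x y : 'cV[R[i]]_m) :
  A^T = mconj A -> hform A y x = (hform A x y)^*%C.
Proof.
move=> AE; rewrite /hform.
have -> : ((x^T *m A *m map_mx (@conjc R) y) 0 0)^*%C
    = (map_mx (@conjc R) (x^T *m A *m map_mx (@conjc R) y)) 0 0 by rewrite [RHS]mxE.
have yK : map_mx (@conjc R) (map_mx (@conjc R) y) = y.
  by apply/matrixP => i j; rewrite !mxE conjcK.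
have trE (M : 'M[R[i]]_1) : M 0 0 = M^T 0 0 by rewrite mxE.
rewrite !map_mxM -map_trmx -[map_mx _ A]AE yK trE.
by rewrite !trmx_mul trmxK mulmxA.
Qed.

Lemma ImC_split (R : realType) (z : R[i]) :
  (complex.Im z)%:C = (z^*%C + z) / 2%:R * 'i%C - z * 'i%C :> R[i].
Proof. by rewrite ImJ_sub; field. Qed.

Section BILDecomposition.
Variables (R : realType) (m : nat) (W : 'cV[R[i]]_m -> Prop).
Hypothesis WD : forall x y, W x -> W y -> W (x + y).
Local Notation C := R[i].
Local Notation vec := 'cV[C]_m.

Lemma linearl_on_addl (F : vec -> vec -> C) x y z :
  (forall a x y z, W x -> W y -> W z -> F (a *: x + y) z = a * F x z + F y z) ->
  W x -> W y -> W z -> F (x + y) z = F x z + F y z.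
Proof. by move=> Flin Wx Wy Wz; rewrite -[x]scale1r Flin // mul1r scale1r. Qed.

Lemma herm_on_addr (H : vec -> vec -> C) x y z : herm_on W H ->
  W x -> W y -> W z -> H z (x + y) = H z x + H z y.
Proof.
move=> [Hlin HC] Wx Wy Wz; have Wxy := WD Wx Wy.
by rewrite !(HC _ z) // (linearl_on_addl Hlin) // rmorphD.
Qed.

Variables (k1 k2 : nat) (a : 'I_k1 -> R) (H : 'I_k1 -> vec -> vec -> C).
Variables (b : 'I_k2 -> R) (G : 'I_k2 -> vec -> vec -> C).
Hypotheses (hH : forall i, herm_on W (H i)) (hG : forall j, symbil_on W (G j)).

Definition BIL_sesq (x y : vec) : C := \sum_(i < k1) (a i)%:C * (- H i x y * 'i%C).

Definition BIL_sym (x y : vec) : C :=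
  \sum_(i < k1) (a i)%:C * (((H i x y)^*%C + H i x y) / 2%:R * 'i%C)
  + \sum_(j < k2) (b j)%:C * (complex.Im (G j x y))%:C.

Lemma BIL_split x y :
  (\sum_(i < k1) a i * complex.Im (H i x y) + \sum_(j < k2) b j * complex.Im (G j x y))%:C
  = BIL_sesq x y + BIL_sym x y.
Proof.
rewrite rmorphD !rmorph_sum addrA -big_split /=; congr (_ + _).
  by apply: eq_bigr => i _; rewrite rmorphM /= (ImC_split (H i x y)); ring.
by apply: eq_bigr => j _; rewrite rmorphM.
Qed.

Lemma BIL_sesq_linearl t a0 x y : W t -> W x -> W y ->
  BIL_sesq (a0 *: x + y) t = a0 * BIL_sesq x t + BIL_sesq y t.
Proof.
move=> Wt Wx Wy; rewrite mulr_sumr -big_split; apply: eq_bigr => i _ /=.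
by rewrite (hH i).1 //; ring.
Qed.

Lemma BIL_sesq_addr x t t' : W x -> W t -> W t' ->
  BIL_sesq x (t + t') = BIL_sesq x t + BIL_sesq x t'.
Proof.
move=> Wx Wt Wt'; rewrite -big_split; apply: eq_bigr => i _ /=.
by rewrite herm_on_addr //; ring.
Qed.

Lemma BIL_symC x y : W x -> W y -> BIL_sym x y = BIL_sym y x.
Proof.
move=> Wx Wy; congr (_ + _); apply: eq_bigr => i _.
  by rewrite ((hH i).2 x y) // conjcK addrC.
by rewrite ((hG i).2 x y).
Qed.

Lemma BIL_sym_addl x y z : W x -> W y -> W z ->
  BIL_sym (x + y) z = BIL_sym x z + BIL_sym y z.
Proof.
move=> Wx Wy Wz; rewrite addrACA -!big_split; congr (_ + _); apply: eq_bigr => i _ /=.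
  by rewrite (linearl_on_addl (hH i).1) // rmorphD; ring.
by rewrite (linearl_on_addl (hG i).1) // raddfD rmorphD /=; ring.
Qed.

End BILDecomposition.

Lemma sym_form_sqrD (V : zmodType) (K : comPzRingType) (W : V -> Prop)
    (Phi : V -> V -> K) t t' :
  (forall x y, W x -> W y -> W (x + y)) ->
  (forall x y, W x -> W y -> Phi x y = Phi y x) ->
  (forall x y z, W x -> W y -> W z -> Phi (x + y) z = Phi x z + Phi y z) ->
  W t -> W t' -> Phi (t + t') (t + t') = Phi t t + 2%:R * Phi t t' + Phi t' t'.
Proof.
move=> WD PhiC PhiD Wt Wt'; have Wtt := WD _ _ Wt Wt'.
rewrite PhiD // (PhiC t) // (PhiC t') // !PhiD // (PhiC t' t) //; ring.
Qed.

Lemma vnorm_ge0 (R : realType) (m : nat) (p : R[i] * 'cV[R[i]]_m) : 0 <= vnorm p.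
Proof.
have normc_ge0 (z : R[i]) : 0 <= Normc.normc z by case: z => ? ?; exact: sqrtr_ge0.
by rewrite addr_ge0 ?sumr_ge0.
Qed.

Lemma holo_on_affine (R : realType) (m : nat) (W : 'cV[R[i]]_m -> Prop)
    (U : R[i] * 'cV[R[i]]_m -> Prop) (c : R[i]) (lam : 'cV[R[i]]_m) :
  holo_on W U (fun p => c + (lam^T *m p.2) 0 0).
Proof.
move=> p _; exists 0, lam => e e_gt0; exists 1 => // u w _ _ /=.
rewrite mulmxDr mxE [X in Normc.normc X](_ : _ = 0) ?Normc.normc0; last by ring.
exact: mulr_ge0 (ltW e_gt0) (vnorm_ge0 _).
Qed.

Theorem proposition1
  (R : realType) (d : int) (n : nat)
  (A : 'M[R[i]]_(n.+2)) (L : 'cV[R[i]]_(n.+2) -> Prop)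
  (Gam : 'M[R[i]]_(n.+2) -> Prop) (l l' : 'cV[R[i]]_(n.+2))
  (N : rat) (Dg : 'cV[R[i]]_(n.+2) -> Prop) (eps : R)
  (B : 'cV[R[i]]_(n.+2) -> 'cV[R[i]]_(n.+2) -> R)
  (hd : d < 0) (hfd : fund_disc d) (hn : (1 <= n)%N)
  (hA : herm_gram d A) (hsig : has_signature A 1)
  (hL : Ok_lattice d L) (hLint : integral_lattice d A L) (hLev : even_lattice A L)
  (hGam : finite_index_subgroup (disc_kernel d A L) Gam)
  (hl : primitive d L l) (hliso : isotropic A l)
  (hl' : primitive d (dual d A L) l') (hl'iso : isotropic A l')
  (hll' : hform A l l' != 0)
  (hN : 0 < N) (hDg : finite_index_sublattice (Dlat A L l l') Dg)
  (hGaml : forall (h : R[i]) (t : 'cV[R[i]]_(n.+2)),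
      (exists q : rat, h = ratr q) -> in_W d A L l l' t ->
      ((exists g, Gam g /\ is_heis d A L l l' g h t) <-> in_Gamma_l N Dg h t))
  (heps : 0 < eps)
  (hB : in_BIL (in_WC A L l l') B) :
  exists F : R[i] -> 'cV[R[i]]_(n.+2) -> (R[i] * 'cV[R[i]]_(n.+2) -> R[i]),
    (forall h t, in_Gamma_l N Dg h t ->
       holo_on (in_WC A L l l') (Ueps d A L l l' eps) (F h t)) /\
    (forall h t h' t', in_Gamma_l N Dg h t -> in_Gamma_l N Dg h' t' ->
       forall p, Ueps d A L l l' eps p ->
         (B t t')%:C =
           F h' t' (heis_act d A l l' (- h) (- t) p)
           - F (heis_mul1 d A h t h' t') (t + t') p
           + F h t p).
Proof.
set W := in_WC A L l l'.
have WD : forall x y, W x -> W y -> W (x + y) by move=> x y; exact: span_overD.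
have [k1 [k2 [a [H [b [G [hH [hG BE]]]]]]]] := hB.
have [k [M [freeM rowsM spanM]]] := span_over_basis (Dlat A L l l').
set c0 := hform A l' l.
have c0_neq0 : c0 != 0 by rewrite /c0 (hform_conj _ _ hA.2) conjc_eq0.
pose S := BIL_sesq a H; pose Phi := BIL_sym a H b G.
pose K x t := - S x t / c0.
have K_linear t : W t -> linear_on (Dlat A L l l') (K^~ t).
  by move=> Wt a0 x y Wx Wy; rewrite /K /S (BIL_sesq_linearl a hH) //; field.
have KE t w : W t -> W w -> K w t = ((functional_of_basis M (K^~ t))^T *m w) 0 0.
  by move=> Wt; apply: functional_of_basisE => //; exact: K_linear.
exists (fun _ t p => - Phi t t / 2%:R + ((functional_of_basis M (K^~ t))^T *m p.2) 0 0).
split=> [h t _|h t h' t' [_ /hDg.1/span_over_gen Wt] [_ /hDg.1/span_over_gen Wt'] p [[Wp _] _]].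
  exact: holo_on_affine.
have shiftE : p.2 + c0 *: - t = (- c0) *: t + p.2 by rewrite scalerN -scaleNr addrC.
have Wtt := WD _ _ Wt Wt'.
have Wshift : W ((- c0) *: t + p.2) by apply: WD => //; exact: span_overZ.
rewrite /= shiftE -!KE // K_linear // /K /S (BIL_sesq_addr WD a hH) //.
rewrite /Phi (sym_form_sqrD WD (BIL_symC a b hH hG) (BIL_sym_addl a b hH hG)) //.
by rewrite BE // BIL_split; field.
Qed.
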